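(* Let $T$ be a tree on $n$ leaves and let $S$ be a minimal isolating set of $T$. Consider the forest $F$ obtained from $T$ by removing all edges in $S$. Then each connected component of $F$ contains exactly one leaf of $T$.
   Context: For a tree $T=(V,E)$, a subset $S\subseteq E$ is an isolating set if for any two distinct leaves $u,v$ there is an edge of $S$ on the path connecting $u$ and $v$. It is minimal if no proper subset of $S$ is an isolating set. *)

(* A finite simple graph is a symmetric irreflexive relation
   [e : rel V] on a finite vertex type [V]; edges are 2-element vertex sets. *)
From mathcomp Require Import all_boot.
Set Implicit Arguments. Unset Strict Implicit. Unset Printing Implicit Defensive.

Section Trees.
Variable V : finType.

Definition simple_graph (e : rel V) : Prop := symmetric e /\ irreflexive e.

Definition edges (e : rel V) : {set {set V}} :=
  [set E : {set V} | [exists u, exists v, e u v && (E == [set u; v])]].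

Definition has_cycle (e : rel V) : Prop :=
  exists c : seq V, [/\ 3 <= size c, uniq c & cycle e c].

Definition is_tree (e : rel V) : Prop :=
  [/\ simple_graph e, (forall u v, connect e u v) & ~ has_cycle e].

Definition is_leaf (e : rel V) (v : V) : bool := #|[set w | e v w]| == 1.

(* simple path from u to v given as u :: p *)
Definition simple_path (e : rel V) (u v : V) (p : seq V) : bool :=
  [&& path e u p, uniq (u :: p) & last u p == v].

Definition path_meets (S : {set {set V}}) (u : V) (p : seq V) : bool :=
  has (fun xy => [set xy.1; xy.2] \in S) (zip (u :: p) p).

(* S is an isolating set: S is a set of edges, and every path between two
   distinct leaves (in a tree this path is unique) contains an edge of S *)
Definition isolating (e : rel V) (S : {set {set V}}) : Prop :=
  S \subset edges e /\
  forall u v p, is_leaf e u -> is_leaf e v -> u != v ->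
    simple_path e u v p -> path_meets S u p.

Definition minimal_isolating (e : rel V) (S : {set {set V}}) : Prop :=
  isolating e S /\ forall S' : {set {set V}}, S' \proper S -> ~ isolating e S'.

Definition remove_edges (e : rel V) (S : {set {set V}}) : rel V :=
  fun u v => e u v && ([set u; v] \notin S).

End Trees.

(* Two distinct leaves in one component of T - S would be joined by a path
   avoiding S, so each component has at most one leaf.  If the component C of
   x had none, then C <> T (trees with two vertices have leaves, e.g. the end of
   a longest path), so some edge ab of S leaves C at a in C.  Putting ab back
   only merges C with the component of b; as C contains no leaf, no two leaves
   get connected, so S minus ab is still isolating, contradicting minimality. *)

From mathcomp Require Import all_boot.
Set Implicit Arguments. Unset Strict Implicit. Unset Printing Implicit Defensive.

Section RemoveEdges.
Variables (V : finType) (e : rel V).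

Lemma remove_edges_sym S : symmetric e -> symmetric (remove_edges e S).
Proof. by move=> sym_e u v; rewrite /remove_edges sym_e setUC. Qed.

Lemma path_remove_edges S u p :
  path (remove_edges e S) u p = path e u p && ~~ path_meets S u p.
Proof.
elim: p u => [|y p IHp] u //=.
by rewrite IHp /remove_edges negb_or andbACA.
Qed.

Lemma remove_edgesD1 S s u v :
  remove_edges e (S :\ s) u v = remove_edges e S u v || e u v && ([set u; v] == s).
Proof. by rewrite /remove_edges in_setD1 negb_and negbK andb_orr orbC. Qed.

Lemma connect_cross (P : pred V) x y :
  connect e x y -> P x -> ~~ P y -> exists a b, [/\ P a, ~~ P b & e a b].
Proof.
move=> /connectP[p p_e ->{y}]; elim: p x p_e => [|z p IHp] x //=; first by move=> _ ->.
case/andP=> e_xz p_z Px; case Pz: (P z); first exact: IHp.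
by exists x, z; rewrite Pz.
Qed.

End RemoveEdges.

Section ConnectAddEdge.
Variables (V : finType) (F F' : rel V) (a b : V).
Hypothesis sym_F : connect_sym F.
Hypothesis F'_sub : forall u v, F' u v -> F u v || ([set u; v] == [set a; b]).

(* The union of the [F]-components of [a] and [b], which become one component
   once the edge [ab] is added. *)
Let near := [pred z | connect F a z || connect F b z].

Lemma near_connect z z' : near z -> connect F z z' -> near z'.
Proof. by move=> /orP[] c_z c_zz'; rewrite /= (connect_trans c_z c_zz') ?orbT. Qed.

Lemma near_end z : z \in [set a; b] -> near z.
Proof. by rewrite !inE => /orP[] /eqP->; rewrite /= connect0 ?orbT. Qed.

Lemma connect_add_edge_step u w y : F' w y ->
  connect F u w \/ near u && near w -> connect F u y \/ near u && near y.
Proof.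
move=> /F'_sub /orP[F_wy | /eqP wy_ab].
  case=> [c_uw | /andP[n_u n_w]]; first by left; exact: connect_trans c_uw (connect1 F_wy).
  by right; rewrite n_u (near_connect n_w (connect1 F_wy)).
have [n_w n_y] : near w /\ near y by rewrite !near_end // -wy_ab !inE eqxx ?orbT.
case=> [c_uw | /andP[n_u _]]; right; rewrite n_y andbT //.
by apply: near_connect n_w _; rewrite sym_F.
Qed.

Lemma connect_add_edge u w : connect F' u w -> connect F u w \/ near u && near w.
Proof.
move=> /connectP[p]; elim/last_ind: p w => [|p y IHp] w; first by move=> _ ->; left.
rewrite rcons_path last_rcons => /andP[p_F' F'_y] ->.
exact: connect_add_edge_step F'_y (IHp _ p_F' erefl).
Qed.

End ConnectAddEdge.

Section Leaves.
Variables (V : finType) (e : rel V).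

Lemma isolating_component_leaf S u v : isolating e S ->
  is_leaf e u -> is_leaf e v -> connect (remove_edges e S) u v -> u = v.
Proof.
move=> [_ isoS] leaf_u leaf_v /connectP[p p_F v_last]; subst v.
case: (shortenP p_F) leaf_v => q q_F uniq_q _ leaf_v; apply/eqP/contraT => u_neq.
move: q_F (isoS _ _ q leaf_u leaf_v u_neq); rewrite path_remove_edges.
by case/andP=> q_e /negbTE->; rewrite /simple_path q_e uniq_q eqxx; apply.
Qed.

Lemma acyclic_path_back_edge x p v w : irreflexive e -> ~ has_cycle e ->
  path e x (rcons p v) -> uniq (x :: rcons p v) -> e v w ->
  w \in x :: rcons p v -> w = last x p.
Proof.
move=> irr_e acyc p_e uniq_p e_vw.
have w_neq : w != v by apply: contraTneq e_vw => ->; rewrite irr_e.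
rewrite -rcons_cons mem_rcons inE (negbTE w_neq) /= => w_in.
have [q1 [q2 xp_eq]] : exists q1 q2, x :: p = q1 ++ w :: q2.
  by case/splitPr: w_in => q1 q2; exists q1, q2.
case: q2 xp_eq => [|z q2] xp_eq; first by move: (congr1 (last x) xp_eq); rewrite last_cat.
have path_eq : x :: rcons p v = q1 ++ w :: rcons (z :: q2) v.
  by rewrite -rcons_cons xp_eq rcons_cat.
have : sorted e (x :: rcons p v) := p_e.
move: uniq_p; rewrite path_eq sorted_cat_cons cat_uniq => /and3P[_ _ uniq_w] /andP[_ p_w].
case: acyc; exists (w :: rcons (z :: q2) v); split => //; first by rewrite /= size_rcons.
by rewrite /cycle rcons_path p_w last_rcons e_vw.
Qed.

Lemma acyclic_has_leaf x y : symmetric e -> irreflexive e -> ~ has_cycle e ->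
  e x y -> exists l, is_leaf e l.
Proof.
move=> sym_e irr_e acyc e_xy.
pose long_path n := [exists x, exists t : n.-tuple V, exists v,
  path e x (rcons t v) && uniq (x :: rcons t v)].
have long_path0 : long_path 0.
  apply/existsP; exists x; apply/existsP; exists [tuple]; apply/existsP; exists y.
  have neq_xy : x != y by apply: contraTneq e_xy => ->; rewrite irr_e.
  by rewrite /= e_xy inE neq_xy.
have long_path_bound n : long_path n -> n <= #|V|.
  rewrite /long_path => /existsP[x' /existsP[t /existsP[v /andP[_ uniq_p]]]].
  apply: leq_trans (leqW (leqnSn n)) _; apply/card_geqP; exists (x' :: rcons t v).
  by rewrite /= size_rcons size_tuple.
case: (ex_maxnP (ex_intro _ 0 long_path0) long_path_bound) => n.
rewrite /long_path => /existsP[u /existsP[t /existsP[v /andP[p_e uniq_p]]]] max_n.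
exists v; apply/eqP/(@eq_card1 _ (last u t)) => w; rewrite !inE.
apply/idP/eqP => [e_vw | ->]; last by move: p_e; rewrite rcons_path sym_e => /andP[].
have [|w_out] := boolP (w \in u :: rcons t v); first exact: acyclic_path_back_edge.
suff /max_n : long_path n.+1 by rewrite ltnn.
apply/existsP; exists u; apply/existsP; exists [tuple of rcons t v]; apply/existsP; exists w.
by rewrite rcons_path p_e last_rcons e_vw -rcons_cons rcons_uniq w_out.
Qed.

Lemma connected_has_edge : (forall u v, connect e u v) -> 1 < #|V| ->
  exists x y, e x y.
Proof.
move=> con /card_gt1P[x [y [_ _ neq_xy]]].
have [|a [b [_ _ e_ab]]] := connect_cross (P := pred1 x) (con x y) (eqxx x).
  by rewrite /= eq_sym.
by exists a, b.
Qed.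

Lemma isolating_setD1_leafless S a b : symmetric e -> isolating e S ->
  (forall l, is_leaf e l -> ~~ connect (remove_edges e S) a l) ->
  isolating e (S :\ [set a; b]).
Proof.
set F := remove_edges e S => sym_e isoS no_leaf_a.
split; first exact: subset_trans (subsetDl _ _) isoS.1.
move=> u v p leaf_u leaf_v neq_uv /and3P[p_e _ /eqP v_last]; apply: contraT => no_meet.
have sym_F : connect_sym F := sym_connect_sym (remove_edges_sym S sym_e).
have F'_sub w y : remove_edges e (S :\ [set a; b]) w y -> F w y || ([set w; y] == [set a; b]).
  by rewrite remove_edgesD1 -/F => /orP[-> // | /andP[_ ->]]; rewrite orbT.
have c_uv : connect (remove_edges e (S :\ [set a; b])) u v.
  by apply/connectP; exists p; rewrite ?path_remove_edges ?p_e.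
case/negP: neq_uv; apply/eqP/(isolating_component_leaf isoS leaf_u leaf_v).
have [//|/andP[near_u near_v]] := connect_add_edge sym_F F'_sub c_uv.
have b_leaf l : is_leaf e l -> connect F a l || connect F b l -> connect F b l.
  by move=> /no_leaf_a/negbTE->.
by apply: connect_trans (b_leaf v leaf_v near_v); rewrite sym_F b_leaf.
Qed.

Lemma minimal_isolating_component_leaf S x : is_tree e -> 1 < #|V| ->
  minimal_isolating e S -> exists2 l, is_leaf e l & connect (remove_edges e S) x l.
Proof.
set F := remove_edges e S => -[[sym_e irr_e] con acyc] V_gt1 [isoS minS].
have [l /andP[leaf_l x_l] | no_leaf] := pickP [pred l | is_leaf e l && connect F x l].
  by exists l.
have [a [b e_ab]] := connected_has_edge con V_gt1.
have [l0 leaf_l0] := acyclic_has_leaf sym_e irr_e acyc e_ab.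
have [|a' [b' [x_a' x_b' e_a'b']]] := connect_cross (P := connect F x) (con x l0) (connect0 F x).
  by move: (no_leaf l0); rewrite /= leaf_l0 /= => ->.
have a'b'_S : [set a'; b'] \in S.
  apply: contraNT x_b' => a'b'_S; apply: connect_trans x_a' (connect1 _).
  by rewrite /F /remove_edges e_a'b' a'b'_S.
case: (minS (S :\ [set a'; b'])); first exact: properD1.
apply: isolating_setD1_leafless => // l leaf_l; apply/negP => a'_l.
by move: (no_leaf l); rewrite /= leaf_l (connect_trans x_a' a'_l).
Qed.

End Leaves.

Theorem proposition3 (V : finType) (e : rel V) (n : nat) (S : {set {set V}}) :
  is_tree e -> 2 <= #|V| -> #|[set v | is_leaf e v]| = n ->
  minimal_isolating e S ->
  forall x : V,
    #|[set l | is_leaf e l & connect (remove_edges e S) x l]| = 1.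
Proof.
move=> tree_e V_gt1 _ minS x.
have [l leaf_l x_l] := minimal_isolating_component_leaf x tree_e V_gt1 minS.
have [[sym_e _] _ _] := tree_e.
have sym_F := sym_connect_sym (remove_edges_sym S sym_e).
apply: (@eq_card1 _ l) => w; rewrite !inE.
apply/andP/eqP => [[leaf_w x_w] | ->]; last by [].
by apply: (isolating_component_leaf minS.1 leaf_w leaf_l); rewrite (connect_trans _ x_l) // sym_F.
Qed.
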